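(* Let $\mathbf{C}$ be a category with pullbacks and coequalizers of equivalence relations, and let $U:\mathbf{C}\to\mathbf{Sets}$ be a faithful functor preserving pullbacks and coequalizers of equivalence relations. Let $\mathcal{P}$ be a class of regular epimorphisms in $\mathbf{C}$ such that: (a) $\mathcal{P}$ is pullback stable; (b) whenever $X\overset{f}{\underset{g}{\rightrightarrows}}Y\xrightarrow{h}Z$ is a coequalizer diagram in $\mathbf{C}$ whose $U$-image is exact (i.e. is a coequalizer diagram in $\mathbf{Sets}$ and $(Uf,Ug)$ is the kernel pair of $Uh$), and $f,g\in\mathcal{P}$, then $h\in\mathcal{P}$. Then every morphism in $\mathcal{P}$ is an effective descent morphism in $\mathbf{C}$.
   Context: For a morphism $p:E\to B$ in a category $\mathbf{C}$ with pullbacks, a descent data for $p$ is a triple $(C,\gamma,\xi)$ with $\gamma:C\to E$, $\xi:E\times_BC\to C$ (pullback of $p$ and $p\gamma$, projections $\pi_1,\pi_2$) such that $\gamma\xi=\pi_1$, $\xi\langle\gamma,1_C\rangle=1_C$, $\xi\circ(E\times_B\xi)=\xi\circ(E\times_B\pi_2)$; a morphism $(C,\gamma,\xi)\to(C',\gamma',\xi')$ is $f:C\to C'$ with $\gamma'f=\gamma$ and $f\xi=\xi'\circ(E\times_Bf)$. This gives the category $\mathrm{Des}(p)$ and the comparison functor $K^p:(\mathbf{C}\downarrow B)\to\mathrm{Des}(p)$, $K^p(A,\alpha)=(E\times_BA,\pi_1,E\times_B\pi_2)$. $p$ is an effective descent morphism if $K^p$ is an equivalence of categories. *)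

Set Implicit Arguments.
Unset Strict Implicit.

Record Category := {
  Ob :> Type;
  Hom : Ob -> Ob -> Type;
  idm : forall A, Hom A A;
  comp : forall A B C, Hom B C -> Hom A B -> Hom A C;
  comp_id_l : forall A B (f : Hom A B), comp (idm B) f = f;
  comp_id_r : forall A B (f : Hom A B), comp f (idm A) = f;
  comp_assoc : forall A B C D (h : Hom C D) (g : Hom B C) (f : Hom A B),
      comp h (comp g f) = comp (comp h g) f
}.
Arguments Hom {c} _ _.
Arguments idm {c} A.
Arguments comp {c A B C} _ _.

Definition SetsCat : Category :=
  {| Ob := Type;
     Hom := fun A B => A -> B;
     idm := fun A (x : A) => x;
     comp := fun A B C (g : B -> C) (f : A -> B) (x : A) => g (f x);
     comp_id_l := fun _ _ _ => eq_refl;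
     comp_id_r := fun _ _ _ => eq_refl;
     comp_assoc := fun _ _ _ _ _ _ _ => eq_refl |}.

Record Functor (C D : Category) := {
  fobj :> C -> D;
  fmap : forall A B : C, Hom A B -> Hom (fobj A) (fobj B);
  fmap_id : forall A : C, fmap (idm A) = idm (fobj A);
  fmap_comp : forall (A B X : C) (g : Hom B X) (f : Hom A B),
      fmap (comp g f) = comp (fmap g) (fmap f)
}.
Arguments fmap {C D} _ {A B} _.

Definition FaithfulFunctor {C D : Category} (F : Functor C D) : Prop :=
  forall (A B : C) (f g : Hom A B), fmap F f = fmap F g -> f = g.

Definition isPullback {C : Category} {A B X P : C}
  (f : Hom A X) (g : Hom B X) (p1 : Hom P A) (p2 : Hom P B) : Prop :=
  comp f p1 = comp g p2 /\
  forall (T : C) (q1 : Hom T A) (q2 : Hom T B), comp f q1 = comp g q2 ->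
    exists! u : Hom T P, comp p1 u = q1 /\ comp p2 u = q2.

Definition isCoequalizer {C : Category} {X Y Z : C}
  (f g : Hom X Y) (h : Hom Y Z) : Prop :=
  comp h f = comp h g /\
  forall (T : C) (k : Hom Y T), comp k f = comp k g ->
    exists! u : Hom Z T, comp u h = k.

(* (r1, r2) : R => X is an (internal) equivalence relation on X:
   jointly monic, and for every T the induced relation on Hom(T,X)
   is reflexive, symmetric and transitive. *)
Definition isEquivRel {C : Category} {R X : C} (r1 r2 : Hom R X) : Prop :=
  (forall (T : C) (a b : Hom T R),
      comp r1 a = comp r1 b -> comp r2 a = comp r2 b -> a = b) /\
  (forall (T : C) (x : Hom T X),
      exists a : Hom T R, comp r1 a = x /\ comp r2 a = x) /\
  (forall (T : C) (a : Hom T R),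
      exists b : Hom T R, comp r1 b = comp r2 a /\ comp r2 b = comp r1 a) /\
  (forall (T : C) (a b : Hom T R), comp r2 a = comp r1 b ->
      exists c : Hom T R, comp r1 c = comp r1 a /\ comp r2 c = comp r2 b).

Definition isRegularEpi {C : Category} {Y Z : C} (h : Hom Y Z) : Prop :=
  exists (X : C) (f g : Hom X Y), isCoequalizer f g h.

Definition HasCoeqOfEquivRels (C : Category) : Prop :=
  forall (R X : C) (r1 r2 : Hom R X), isEquivRel r1 r2 ->
    exists (Z : C) (h : Hom X Z), isCoequalizer r1 r2 h.

Definition PreservesPullbacks {C D : Category} (F : Functor C D) : Prop :=
  forall (A B X P : C) (f : Hom A X) (g : Hom B X) (p1 : Hom P A) (p2 : Hom P B),
    isPullback f g p1 p2 ->
    isPullback (fmap F f) (fmap F g) (fmap F p1) (fmap F p2).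

Definition PreservesCoeqOfEquivRels {C D : Category} (F : Functor C D) : Prop :=
  forall (R X Z : C) (r1 r2 : Hom R X) (h : Hom X Z),
    isEquivRel r1 r2 -> isCoequalizer r1 r2 h ->
    isCoequalizer (fmap F r1) (fmap F r2) (fmap F h).

(* Chosen pullbacks (a "category with pullbacks"), with chosen
   canonical comparison maps. *)
Record PB {C : Category} {A B X : C} (f : Hom A X) (g : Hom B X) := {
  pbOb : C;
  pr1 : Hom pbOb A;
  pr2 : Hom pbOb B;
  pbComm : comp f pr1 = comp g pr2;
  pbLift : forall (T : C) (q1 : Hom T A) (q2 : Hom T B),
      comp f q1 = comp g q2 -> Hom T pbOb
}.
Arguments pbOb {C A B X f g} _.
Arguments pr1 {C A B X f g} _.
Arguments pr2 {C A B X f g} _.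
Arguments pbComm {C A B X f g} _.
Arguments pbLift {C A B X f g} _ {T} q1 q2 _.

Definition Pullbacks (C : Category) : Type :=
  forall (A B X : C) (f : Hom A X) (g : Hom B X), PB f g.

Definition ValidPullbacks {C : Category} (pb : Pullbacks C) : Prop :=
  forall (A B X : C) (f : Hom A X) (g : Hom B X),
    isPullback f g (pr1 (pb A B X f g)) (pr2 (pb A B X f g)) /\
    (forall (T : C) (q1 : Hom T A) (q2 : Hom T B) (H : comp f q1 = comp g q2),
       comp (pr1 (pb A B X f g)) (pbLift (pb A B X f g) q1 q2 H) = q1 /\
       comp (pr2 (pb A B X f g)) (pbLift (pb A B X f g) q1 q2 H) = q2).

Section Descent.
Variables (C : Category) (pb : Pullbacks C) (E B : C) (p : Hom E B).

Definition PBp {D : C} (g : Hom D B) := @pb E D B p g.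

(* raw triple (C, gamma, xi) with xi : E x_B C -> C, where E x_B C is
   the pullback of p and p gamma *)
Record DesObj := {
  dC : C;
  dgam : Hom dC E;
  dxi : Hom (pbOb (PBp (comp p dgam))) dC
}.

(* The maps <gamma,1_C>,
   E x_B xi and E x_B pi2 are written via their defining equations
   (they are the unique maps satisfying them). Here
   E x_B (E x_B C) is the pullback of p and p pi1 (= p gamma pi2). *)
Definition isDescentData (D : DesObj) : Prop :=
  let P1 := PBp (comp p (dgam D)) in
  let P2 := PBp (comp p (pr1 P1)) in
  comp (dgam D) (dxi D) = pr1 P1 /\
  (forall d : Hom (dC D) (pbOb P1),
      comp (pr1 P1) d = dgam D -> comp (pr2 P1) d = idm (dC D) ->
      comp (dxi D) d = idm (dC D)) /\
  (forall m n : Hom (pbOb P2) (pbOb P1),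
      comp (pr1 P1) m = pr1 P2 -> comp (pr2 P1) m = comp (dxi D) (pr2 P2) ->
      comp (pr1 P1) n = pr1 P2 -> comp (pr2 P1) n = comp (pr2 P1) (pr2 P2) ->
      comp (dxi D) m = comp (dxi D) n).

Definition isDesHom (D D' : DesObj) (f : Hom (dC D) (dC D')) : Prop :=
  let P1 := PBp (comp p (dgam D)) in
  let P1' := PBp (comp p (dgam D')) in
  comp (dgam D') f = dgam D /\
  (forall m : Hom (pbOb P1) (pbOb P1'),
      comp (pr1 P1') m = pr1 P1 -> comp (pr2 P1') m = comp f (pr2 P1) ->
      comp f (dxi D) = comp (dxi D') m).

Lemma K_xi_comm (A : C) (al : Hom A B) :
  let P := PBp al in
  let Q := PBp (comp p (pr1 P)) in
  comp p (pr1 Q) = comp al (comp (pr2 P) (pr2 Q)).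
Proof.
  simpl. rewrite (pbComm (PBp (comp p (pr1 (PBp al))))).
  rewrite (pbComm (PBp al)). rewrite <- comp_assoc. reflexivity.
Qed.

(* K^p (A, alpha) = (E x_B A, pi1, E x_B pi2) *)
Definition Kob (A : C) (al : Hom A B) : DesObj :=
  {| dC := pbOb (PBp al);
     dgam := pr1 (PBp al);
     dxi := pbLift (PBp al) (pr1 (PBp (comp p (pr1 (PBp al)))))
              (comp (pr2 (PBp al)) (pr2 (PBp (comp p (pr1 (PBp al))))))
              (K_xi_comm al) |}.

(* f = K^p(a) = E x_B a, i.e. f is the (unique) map with
   pi1 f = pi1 and pi2 f = a pi2. *)
Definition IsKmap (A A' : C) (al : Hom A B) (al' : Hom A' B)
  (a : Hom A A') (f : Hom (pbOb (PBp al)) (pbOb (PBp al'))) : Prop :=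
  comp (pr1 (PBp al')) f = pr1 (PBp al) /\
  comp (pr2 (PBp al')) f = comp a (pr2 (PBp al)).

(* K^p : (C | B) -> Des(p) is an equivalence of categories:
   faithful, full and essentially surjective. *)
Definition K_faithful : Prop :=
  forall (A A' : C) (al : Hom A B) (al' : Hom A' B) (a a' : Hom A A')
         (f : Hom (pbOb (PBp al)) (pbOb (PBp al'))),
    comp al' a = al -> comp al' a' = al ->
    IsKmap a f -> IsKmap a' f -> a = a'.

Definition K_full : Prop :=
  forall (A A' : C) (al : Hom A B) (al' : Hom A' B)
         (f : Hom (pbOb (PBp al)) (pbOb (PBp al'))),
    @isDesHom (Kob al) (Kob al') f ->
    exists a : Hom A A', comp al' a = al /\ IsKmap a f.

Definition K_essSurj : Prop :=
  forall D : DesObj, isDescentData D ->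
    exists (A : C) (al : Hom A B) (f : Hom (dC (Kob al)) (dC D))
           (g : Hom (dC D) (dC (Kob al))),
      @isDesHom (Kob al) D f /\ @isDesHom D (Kob al) g /\
      comp f g = idm (dC D) /\ comp g f = idm (dC (Kob al)).

Definition EffectiveDescent : Prop := K_faithful /\ K_full /\ K_essSurj.

End Descent.
Arguments EffectiveDescent {C} pb {E B} p.

(* Pulling back p ∈ P along any α : A → B gives a regular epimorphism
   π2 : E ×_B A → A, which makes K^p faithful, and full: a morphism of descent
   data is constant on the fibres of π2 and so descends along it.

   For a descent datum (C, γ, ξ), the pair (ξ, π2) : E ×_B C ⇉ C is an
   equivalence relation (unit and cocycle give reflexivity and transitivity,
   the swap (e, c) ↦ (γ c, ξ (e, c)) gives symmetry).  Let h : C → A be its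
   coequalizer and α : A → B the map induced by p γ.  As U preserves the
   pullback and the coequalizer, (Uξ, Uπ2) is the kernel pair of Uh; π2 ∈ P
   by stability, and so is ξ, the pullback of π2 along the identity through
   the swap; hence h ∈ P by (b), and E ×_B h ∈ P as a pullback of h.  Then ξ
   descends along the regular epimorphism E ×_B h to an isomorphism of
   descent data K^p(A, α) ≅ (C, γ, ξ) with inverse ⟨γ, h⟩.

   Since U is faithful and preserves pullbacks, equations between morphisms
   are checked on elements of their U-images throughout. *)

From Stdlib Require Import Relation_Definitions.
From Stdlib Require Import FunctionalExtensionality PropExtensionality ClassicalEpsilon.
Set Implicit Arguments.
Unset Strict Implicit.

Section PullbackSquares.
Variable C : Category.

Lemma isPullback_sym {A B X P : C} (f : Hom A X) (g : Hom B X)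
    (p1 : Hom P A) (p2 : Hom P B) :
  isPullback f g p1 p2 -> isPullback g f p2 p1.
Proof.
  intros [Hc Hu]. split; [symmetry; exact Hc|].
  intros T q1 q2 Hq. destruct (Hu T q2 q1 (eq_sym Hq)) as [u [[H1 H2] Hun]].
  exists u. split; [split; assumption|].
  intros v [V1 V2]. apply Hun. split; assumption.
Qed.

Lemma pullback_jointly_monic {A B X P T : C} (f : Hom A X) (g : Hom B X)
    (p1 : Hom P A) (p2 : Hom P B) (u v : Hom T P) :
  isPullback f g p1 p2 -> comp p1 u = comp p1 v -> comp p2 u = comp p2 v -> u = v.
Proof.
  intros [Hc Hu] E1 E2.
  assert (Hq : comp f (comp p1 v) = comp g (comp p2 v))
    by (rewrite !comp_assoc, Hc; reflexivity).
  destruct (Hu T _ _ Hq) as [w [_ Hw]].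
  rewrite <- (Hw u (conj E1 E2)). apply Hw. split; reflexivity.
Qed.

Lemma isPullback_idm_iso {A X P : C} (f : Hom A X) (q : Hom P X)
    (s : Hom P A) (t : Hom A P) :
  comp s t = idm A -> comp t s = idm P -> comp f s = q ->
  isPullback (idm X) f q s.
Proof.
  intros Hst Hts Hq. split; [rewrite comp_id_l; symmetry; exact Hq|].
  intros T q1 q2 Hq12. rewrite comp_id_l in Hq12. subst q q1.
  exists (comp t q2). split; [split|].
  - rewrite <- comp_assoc, (comp_assoc s t), Hst, comp_id_l. reflexivity.
  - rewrite comp_assoc, Hst. apply comp_id_l.
  - intros v [_ <-]. rewrite comp_assoc, Hts. apply comp_id_l.
Qed.

Lemma pullback_pasting_left {E A Y B Q R : C} (p : Hom E B) (al : Hom A B)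
    (h : Hom Y A) (q1 : Hom Q E) (q2 : Hom Q A) (r1 : Hom R E) (r2 : Hom R Y)
    (j : Hom R Q) :
  isPullback p al q1 q2 -> isPullback p (comp al h) r1 r2 ->
  comp q1 j = r1 -> comp q2 j = comp h r2 -> isPullback q2 h j r2.
Proof.
  intros Hright [_ Houter] Hj1 Hj2. split; [exact Hj2|].
  intros T t1 t2 Ht.
  assert (Hc : comp p (comp q1 t1) = comp (comp al h) t2).
  { rewrite comp_assoc, (proj1 Hright), <- !comp_assoc, Ht. reflexivity. }
  destruct (Houter T _ _ Hc) as [u [[U1 U2] Hu]].
  exists u. split; [split|].
  - apply (pullback_jointly_monic Hright).
    + rewrite comp_assoc, Hj1. exact U1.
    + rewrite comp_assoc, Hj2, <- comp_assoc, U2. symmetry; exact Ht.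
  - exact U2.
  - intros v [<- V2]. apply Hu. split; [|exact V2].
    rewrite comp_assoc, Hj1. reflexivity.
Qed.

Lemma regularEpi_epi {Y Z : C} (h : Hom Y Z) :
  isRegularEpi h -> forall (T : C) (a b : Hom Z T), comp a h = comp b h -> a = b.
Proof.
  intros [X [f [g [Hc Hu]]]] T a b Hab.
  destruct (Hu T (comp a h)) as [u [_ Hun]].
  { rewrite <- !comp_assoc, Hc. reflexivity. }
  transitivity u; [symmetry|]; apply Hun; [reflexivity | symmetry; exact Hab].
Qed.

End PullbackSquares.

Lemma sets_pullback_jointly_injective {A B X P : Type} (f : A -> X) (g : B -> X)
    (p1 : P -> A) (p2 : P -> B) :
  @isPullback SetsCat A B X P f g p1 p2 ->
  forall z z', p1 z = p1 z' -> p2 z = p2 z' -> z = z'.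
Proof.
  intros H z z' E1 E2.
  assert (Hzz : (fun _ : unit => z) = (fun _ => z')).
  { apply (pullback_jointly_monic H); cbn; rewrite ?E1, ?E2; reflexivity. }
  exact (f_equal (fun u => u tt) Hzz).
Qed.

Lemma sets_pullback_surj {A B X P : Type} (f : A -> X) (g : B -> X)
    (p1 : P -> A) (p2 : P -> B) :
  @isPullback SetsCat A B X P f g p1 p2 ->
  forall a b, f a = g b -> exists z, p1 z = a /\ p2 z = b.
Proof.
  intros [_ Hu] a b E.
  destruct (Hu unit (fun _ => a) (fun _ => b)) as [u [[U1 U2] _]].
  { apply functional_extensionality. intro. exact E. }
  exists (u tt).
  split; [exact (f_equal (fun k => k tt) U1) | exact (f_equal (fun k => k tt) U2)].
Qed.

Lemma sets_isPullback_intro {A B X P : Type} (f : A -> X) (g : B -> X)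
    (p1 : P -> A) (p2 : P -> B) :
  (forall z, f (p1 z) = g (p2 z)) ->
  (forall z z', p1 z = p1 z' -> p2 z = p2 z' -> z = z') ->
  (forall a b, f a = g b -> exists z, p1 z = a /\ p2 z = b) ->
  @isPullback SetsCat A B X P f g p1 p2.
Proof.
  intros Hc Hinj Hsurj. split; [apply functional_extensionality; exact Hc|].
  intros T q1 q2 Hq. cbn in Hq.
  pose (lift t := constructive_indefinite_description _
                    (Hsurj _ _ (f_equal (fun k => k t) Hq))).
  exists (fun t => proj1_sig (lift t)). split; [split|].
  - apply functional_extensionality. intro t. exact (proj1 (proj2_sig (lift t))).
  - apply functional_extensionality. intro t. exact (proj2 (proj2_sig (lift t))).
  - intros v [<- <-]. apply functional_extensionality. intro t.
    destruct (proj2_sig (lift t)) as [L1 L2].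
    apply Hinj; [rewrite L1 | rewrite L2]; reflexivity.
Qed.

Lemma sets_coequalizer_surj {X Y Z : Type} (f g : X -> Y) (h : Y -> Z) :
  @isCoequalizer SetsCat X Y Z f g h -> forall z, exists y, h y = z.
Proof.
  intros [_ Hu] z.
  (* Both the constant predicate True and the image of h factor (fun _ => True) through h. *)
  destruct (Hu Prop (fun _ => True)) as [u [_ Hun]]; [reflexivity|].
  assert (Htriv : u = fun _ => True) by (apply Hun; reflexivity).
  assert (Himg : u = fun z => exists y, h y = z).
  { apply Hun. apply functional_extensionality. intro y.
    apply propositional_extensionality.
    split; [intros; exact I | intros _; exists y; reflexivity]. }
  rewrite <- (f_equal (fun k => k z) (eq_trans (eq_sym Htriv) Himg)). exact I.
Qed.

Definition spanned_rel {X Y : Type} (r1 r2 : X -> Y) : relation Y :=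
  fun c c' => exists r, r1 r = c /\ r2 r = c'.

Lemma sets_coequalizer_effective {X Y Z : Type} (r1 r2 : X -> Y) (h : Y -> Z) :
  equivalence Y (spanned_rel r1 r2) -> @isCoequalizer SetsCat X Y Z r1 r2 h ->
  forall c c', h c = h c' -> spanned_rel r1 r2 c c'.
Proof.
  intros [Rrefl Rtrans Rsym] [_ Hu] c c' Hcc.
  (* The class map of the relation factors through h. *)
  pose (cls c := fun z => spanned_rel r1 r2 z c).
  destruct (Hu (Y -> Prop) cls) as [u [Hcls _]].
  { apply functional_extensionality. intro r. apply functional_extensionality. intro z.
    assert (Hr : spanned_rel r1 r2 (r1 r) (r2 r)) by (exists r; split; reflexivity).
    apply propositional_extensionality. split; intro Hz.
    - exact (Rtrans _ _ _ Hz Hr).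
    - exact (Rtrans _ _ _ Hz (Rsym _ _ Hr)). }
  assert (Hclass : cls c = cls c').
  { rewrite <- Hcls. cbn. rewrite Hcc. reflexivity. }
  change (cls c' c). rewrite <- Hclass. apply Rrefl.
Qed.

Section ElementwiseReasoning.
Variables (C : Category) (U : Functor C SetsCat).
Hypotheses (HUfaith : FaithfulFunctor U) (HUpb : PreservesPullbacks U).

Definition uf {A B : C} (f : Hom A B) : U A -> U B := fmap U f.

Lemma uf_comp A B X (g : Hom B X) (f : Hom A B) x : uf (comp g f) x = uf g (uf f x).
Proof. unfold uf. rewrite fmap_comp. reflexivity. Qed.

Lemma uf_id A x : uf (idm A) x = x.
Proof. unfold uf. rewrite fmap_id. reflexivity. Qed.

Lemma uf_eq A B (f g : Hom A B) x : f = g -> uf f x = uf g x.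
Proof. intros ->. reflexivity. Qed.

Lemma uf_inj A B (f g : Hom A B) : (forall x, uf f x = uf g x) -> f = g.
Proof. intro H. apply HUfaith. apply functional_extensionality. exact H. Qed.

Section PullbackElements.
Variables (A B X P : C) (f : Hom A X) (g : Hom B X) (p1 : Hom P A) (p2 : Hom P B).
Hypothesis Hpb : isPullback f g p1 p2.

Lemma pullback_comm_el z : uf f (uf p1 z) = uf g (uf p2 z).
Proof. rewrite <- !uf_comp. apply uf_eq. apply Hpb. Qed.

Lemma pullback_ext_el z z' : uf p1 z = uf p1 z' -> uf p2 z = uf p2 z' -> z = z'.
Proof. intros E1 E2. exact (sets_pullback_jointly_injective (HUpb Hpb) E1 E2). Qed.

Lemma pullback_surj_el a b : uf f a = uf g b -> exists z, uf p1 z = a /\ uf p2 z = b.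
Proof. intro Hab. exact (sets_pullback_surj (HUpb Hpb) Hab). Qed.

End PullbackElements.

Lemma regularEpi_desc {Y Z T : C} (h : Hom Y Z) (k : Hom Y T) :
  isRegularEpi h -> (forall y y', uf h y = uf h y' -> uf k y = uf k y') ->
  exists u, comp u h = k.
Proof.
  intros [X [f [g [Hc Hu]]]] Hk.
  destruct (Hu T k) as [u [Hu1 _]]; [|exists u; exact Hu1].
  apply uf_inj. intro x. rewrite !uf_comp. apply Hk.
  rewrite <- !uf_comp. apply uf_eq. exact Hc.
Qed.

End ElementwiseReasoning.

Section ComparisonFunctor.
Variables (C : Category) (U : Functor C SetsCat).
Hypotheses (HUfaith : FaithfulFunctor U) (HUpb : PreservesPullbacks U).
Variables (pb : Pullbacks C) (E B : C) (p : Hom E B).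
Hypothesis Hpb : ValidPullbacks pb.

Notation uf := (@uf C U).
Notation Q al := (PBp pb p al).
Notation Q2 al := (Q (comp p (pr1 (Q al)))).

Lemma Q_isPullback {A : C} (al : Hom A B) : isPullback p al (pr1 (Q al)) (pr2 (Q al)).
Proof. exact (proj1 (@Hpb E A B p al)). Qed.

Lemma Q_lift_pr1 {A T : C} (al : Hom A B) (q1 : Hom T E) (q2 : Hom T A) Hq :
  comp (pr1 (Q al)) (pbLift (Q al) q1 q2 Hq) = q1.
Proof. exact (proj1 (proj2 (@Hpb E A B p al) T q1 q2 Hq)). Qed.

Lemma Q_lift_pr2 {A T : C} (al : Hom A B) (q1 : Hom T E) (q2 : Hom T A) Hq :
  comp (pr2 (Q al)) (pbLift (Q al) q1 q2 Hq) = q2.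
Proof. exact (proj2 (proj2 (@Hpb E A B p al) T q1 q2 Hq)). Qed.

Lemma Q_comm_el {A : C} (al : Hom A B) z :
  uf p (uf (pr1 (Q al)) z) = uf al (uf (pr2 (Q al)) z).
Proof. exact (pullback_comm_el (Q_isPullback al) z). Qed.

Lemma Q_ext_el {A : C} (al : Hom A B) z z' :
  uf (pr1 (Q al)) z = uf (pr1 (Q al)) z' -> uf (pr2 (Q al)) z = uf (pr2 (Q al)) z' -> z = z'.
Proof. apply (pullback_ext_el HUpb (Q_isPullback al)). Qed.

Lemma Q_surj_el {A : C} (al : Hom A B) e a : uf p e = uf al a ->
  exists z, uf (pr1 (Q al)) z = e /\ uf (pr2 (Q al)) z = a.
Proof. apply (pullback_surj_el HUpb (Q_isPullback al)). Qed.

Lemma Q_lift_pr1_el {A T : C} (al : Hom A B) (q1 : Hom T E) (q2 : Hom T A) Hq t :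
  uf (pr1 (Q al)) (uf (pbLift (Q al) q1 q2 Hq) t) = uf q1 t.
Proof. rewrite <- uf_comp. apply uf_eq, Q_lift_pr1. Qed.

Lemma Q_lift_pr2_el {A T : C} (al : Hom A B) (q1 : Hom T E) (q2 : Hom T A) Hq t :
  uf (pr2 (Q al)) (uf (pbLift (Q al) q1 q2 Hq) t) = uf q2 t.
Proof. rewrite <- uf_comp. apply uf_eq, Q_lift_pr2. Qed.

Lemma Kob_xi_pr1_el {A : C} (al : Hom A B) w :
  uf (pr1 (Q al)) (uf (dxi (Kob pb p al)) w) = uf (pr1 (Q2 al)) w.
Proof. apply Q_lift_pr1_el. Qed.

Lemma Kob_xi_pr2_el {A : C} (al : Hom A B) w :
  uf (pr2 (Q al)) (uf (dxi (Kob pb p al)) w)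
  = uf (pr2 (Q al)) (uf (pr2 (Q2 al)) w).
Proof. etransitivity; [apply Q_lift_pr2_el|]. apply uf_comp. Qed.

Section RegularProjections.
Hypothesis Hreg : forall (A : C) (al : Hom A B), isRegularEpi (pr2 (Q al)).

Lemma K_faithful_of_regular : K_faithful pb p.
Proof.
  intros A A' al al' a a' f _ _ [_ F2] [_ G2].
  apply (regularEpi_epi (Hreg al)). rewrite <- F2, G2. reflexivity.
Qed.

(* If z and z' have the same A-component then z = xi (pr1 z, z'), so the
   compatibility of f with xi applies. *)
Lemma desHom_Kob_fibrewise {A A' : C} (al : Hom A B) (al' : Hom A' B)
    (f : Hom (pbOb (Q al)) (pbOb (Q al'))) :
  isDesHom (D:=Kob pb p al) (D':=Kob pb p al') f ->
  forall z z', uf (pr2 (Q al)) z = uf (pr2 (Q al)) z' ->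
    uf (comp (pr2 (Q al')) f) z = uf (comp (pr2 (Q al')) f) z'.
Proof.
  intros [Hf1 Hf2]. cbn [dgam Kob] in Hf1.
  assert (Hf1e : forall z, uf (pr1 (Q al')) (uf f z) = uf (pr1 (Q al)) z).
  { intro z. rewrite <- uf_comp. apply uf_eq. exact Hf1. }
  assert (Hm : comp p (pr1 (Q2 al))
               = comp (comp p (pr1 (Q al'))) (comp f (pr2 (Q2 al)))).
  { apply (uf_inj HUfaith). intro w. rewrite !uf_comp, Hf1e.
    rewrite (Q_comm_el (al:=comp p (pr1 (Q al)))). apply uf_comp. }
  set (m := pbLift (Q2 al') (pr1 (Q2 al)) (comp f (pr2 (Q2 al))) Hm).
  assert (Hfm := Hf2 m (Q_lift_pr1 Hm) (Q_lift_pr2 Hm)).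
  intros z z' Hzz.
  destruct (Q_surj_el (al:=comp p (pr1 (Q al))) (e:=uf (pr1 (Q al)) z) (a:=z'))
    as [w [W1 W2]].
  { rewrite uf_comp, !Q_comm_el, Hzz. reflexivity. }
  assert (Hw : uf (dxi (Kob pb p al)) w = z).
  { apply (Q_ext_el (al:=al)).
    - rewrite Kob_xi_pr1_el. exact W1.
    - rewrite Kob_xi_pr2_el, W2. symmetry; exact Hzz. }
  rewrite <- Hw, !uf_comp.
  transitivity (uf (pr2 (Q al')) (uf (comp (dxi (Kob pb p al')) m) w)).
  { f_equal. rewrite <- uf_comp. exact (uf_eq w Hfm). }
  rewrite uf_comp, Kob_xi_pr2_el. unfold m. rewrite Q_lift_pr2_el.
  rewrite uf_comp, W2. reflexivity.
Qed.

Lemma K_full_of_regular : K_full pb p.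
Proof.
  intros A A' al al' f Hf.
  destruct (regularEpi_desc HUfaith (Hreg al) (desHom_Kob_fibrewise Hf)) as [a Ha].
  pose proof (proj1 Hf) as Hf1. cbn [dgam Kob] in Hf1.
  exists a. split; [|split; [exact Hf1 | symmetry; exact Ha]].
  apply (regularEpi_epi (Hreg al)). apply (uf_inj HUfaith). intro z.
  rewrite !uf_comp, <- (uf_comp a), (uf_eq z Ha), uf_comp, <- Q_comm_el.
  transitivity (uf p (uf (pr1 (Q al)) z)); [|apply Q_comm_el].
  f_equal. rewrite <- uf_comp. apply uf_eq. exact Hf1.
Qed.

End RegularProjections.

Section DescentDatum.
Variables (C0 : C) (g : Hom C0 E) (x : Hom (pbOb (Q (comp p g))) C0).
Hypothesis HD : isDescentData {| dC := C0; dgam := g; dxi := x |}.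

Notation pi1 := (pr1 (Q (comp p g))).
Notation pi2 := (pr2 (Q (comp p g))).

Lemma xi_gamma_el r : uf g (uf x r) = uf pi1 r.
Proof. rewrite <- uf_comp. apply uf_eq. exact (proj1 HD). Qed.

Lemma pi_comm_el r : uf p (uf pi1 r) = uf p (uf g (uf pi2 r)).
Proof. rewrite <- (uf_comp p g). apply Q_comm_el. Qed.

Lemma diag_comm : comp p g = comp (comp p g) (idm C0).
Proof. symmetry; apply comp_id_r. Qed.

Definition diag : Hom C0 (pbOb (Q (comp p g))) := pbLift _ g (idm C0) diag_comm.

Lemma diag_pi1 : comp pi1 diag = g.
Proof. apply Q_lift_pr1. Qed.

Lemma diag_pi2 : comp pi2 diag = idm C0.
Proof. apply Q_lift_pr2. Qed.

Lemma diag_pi1_el c : uf pi1 (uf diag c) = uf g c.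
Proof. apply Q_lift_pr1_el. Qed.

Lemma diag_pi2_el c : uf pi2 (uf diag c) = c.
Proof. unfold diag. rewrite Q_lift_pr2_el. apply uf_id. Qed.

Lemma xi_diag : comp x diag = idm C0.
Proof. exact (proj1 (proj2 HD) diag diag_pi1 diag_pi2). Qed.

Lemma xi_diag_el c : uf x (uf diag c) = c.
Proof. rewrite <- uf_comp, (uf_eq c xi_diag). apply uf_id. Qed.

(* For r2 = (e', c), r1 = (e, xi r2) and r3 = (e, c) this is the cocycle axiom
   xi (e, xi (e', c)) = xi (e, c) on elements. *)
Lemma xi_cocycle_el r1 r2 r3 :
  uf pi1 r1 = uf pi1 r3 -> uf pi2 r1 = uf x r2 -> uf pi2 r3 = uf pi2 r2 ->
  uf x r1 = uf x r3.
Proof.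
  intros H13 H12 H32.
  assert (Hm : comp p (pr1 (Q2 (comp p g)))
               = comp (comp p g) (comp x (pr2 (Q2 (comp p g))))).
  { apply (uf_inj HUfaith). intro w. rewrite !uf_comp, xi_gamma_el.
    rewrite <- (uf_comp p pi1). apply Q_comm_el. }
  assert (Hn : comp p (pr1 (Q2 (comp p g)))
               = comp (comp p g) (comp pi2 (pr2 (Q2 (comp p g))))).
  { apply (uf_inj HUfaith). intro w. rewrite !uf_comp, <- pi_comm_el.
    rewrite <- (uf_comp p pi1). apply Q_comm_el. }
  set (m := pbLift (Q (comp p g)) (pr1 (Q2 (comp p g))) (comp x (pr2 (Q2 (comp p g)))) Hm).
  set (n := pbLift (Q (comp p g)) (pr1 (Q2 (comp p g))) (comp pi2 (pr2 (Q2 (comp p g)))) Hn).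
  assert (Hmn : comp x m = comp x n).
  { apply (proj2 (proj2 HD));
      [apply (Q_lift_pr1 Hm) | apply (Q_lift_pr2 Hm)
      | apply (Q_lift_pr1 Hn) | apply (Q_lift_pr2 Hn)]. }
  destruct (Q_surj_el (al:=comp p pi1) (e:=uf pi1 r1) (a:=r2)) as [w [W1 W2]].
  { rewrite uf_comp, pi_comm_el, H12, xi_gamma_el. reflexivity. }
  assert (Em : uf m w = r1).
  { apply (Q_ext_el (al:=comp p g)).
    - unfold m. rewrite Q_lift_pr1_el. exact W1.
    - unfold m. rewrite Q_lift_pr2_el, uf_comp, W2. symmetry; exact H12. }
  assert (En : uf n w = r3).
  { apply (Q_ext_el (al:=comp p g)).
    - unfold n. rewrite Q_lift_pr1_el, W1. exact H13.
    - unfold n. rewrite Q_lift_pr2_el, uf_comp, W2. symmetry; exact H32. }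
  rewrite <- Em, <- En, <- !uf_comp. apply uf_eq. exact Hmn.
Qed.

Lemma xi_pi2_jointly_injective_el r r' :
  uf x r = uf x r' -> uf pi2 r = uf pi2 r' -> r = r'.
Proof.
  intros H1 H2. apply (Q_ext_el (al:=comp p g)); [|exact H2].
  rewrite <- !xi_gamma_el, H1. reflexivity.
Qed.

Lemma swap_comm : comp p (comp g pi2) = comp (comp p g) x.
Proof.
  apply (uf_inj HUfaith). intro r. rewrite !uf_comp, xi_gamma_el.
  symmetry. apply pi_comm_el.
Qed.

Definition swap : Hom (pbOb (Q (comp p g))) (pbOb (Q (comp p g))) :=
  pbLift _ (comp g pi2) x swap_comm.

Lemma swap_pi1_el r : uf pi1 (uf swap r) = uf g (uf pi2 r).
Proof. unfold swap. rewrite Q_lift_pr1_el. apply uf_comp. Qed.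

Lemma swap_pi2 : comp pi2 swap = x.
Proof. apply Q_lift_pr2. Qed.

Lemma swap_pi2_el r : uf pi2 (uf swap r) = uf x r.
Proof. unfold swap. apply Q_lift_pr2_el. Qed.

Lemma xi_swap_el r : uf x (uf swap r) = uf pi2 r.
Proof.
  rewrite (@xi_cocycle_el (uf swap r) r (uf diag (uf pi2 r))).
  - apply xi_diag_el.
  - rewrite swap_pi1_el, diag_pi1_el. reflexivity.
  - apply swap_pi2_el.
  - apply diag_pi2_el.
Qed.

Lemma swap_involutive : comp swap swap = idm _.
Proof.
  apply (uf_inj HUfaith). intro r. rewrite uf_comp, uf_id.
  apply xi_pi2_jointly_injective_el.
  - rewrite xi_swap_el. apply swap_pi2_el.
  - rewrite swap_pi2_el. apply xi_swap_el.
Qed.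

Lemma swap_isPullback : isPullback (idm C0) pi2 x swap.
Proof. exact (isPullback_idm_iso swap_involutive swap_involutive swap_pi2). Qed.

Notation rel := (spanned_rel (uf x) (uf pi2)).

Lemma rel_equivalence : equivalence (U C0) rel.
Proof.
  split.
  - intro c. exists (uf diag c). split; [apply xi_diag_el | apply diag_pi2_el].
  - intros a b c [r1 [R11 R12]] [r2 [R21 R22]].
    destruct (Q_surj_el (al:=comp p g) (e:=uf pi1 r1) (a:=c)) as [r3 [R31 R32]].
    { rewrite pi_comm_el, uf_comp, R12, <- R21, xi_gamma_el, pi_comm_el, R22.
      reflexivity. }
    exists r3. split; [|exact R32].
    rewrite <- R11. symmetry. apply (@xi_cocycle_el r1 r2 r3).
    + symmetry; exact R31.
    + rewrite R12. symmetry; exact R21.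
    + rewrite R32. symmetry; exact R22.
  - intros c c' [r [R1 R2]]. exists (uf swap r).
    rewrite xi_swap_el, swap_pi2_el. split; assumption.
Qed.

Lemma xi_pi2_isEquivRel : isEquivRel x pi2.
Proof.
  split; [|split; [|split]].
  - intros T a b Ha Hb. apply (uf_inj HUfaith). intro t.
    apply xi_pi2_jointly_injective_el; rewrite <- !uf_comp; apply uf_eq; assumption.
  - intros T y. exists (comp diag y).
    rewrite !comp_assoc, xi_diag, diag_pi2, comp_id_l. split; reflexivity.
  - intros T a. exists (comp swap a).
    rewrite !comp_assoc, swap_pi2. split; [|reflexivity].
    apply (uf_inj HUfaith). intro t. rewrite !uf_comp. apply xi_swap_el.
  - intros T a b Hab.
    assert (Hc : comp p (comp pi1 a) = comp (comp p g) (comp pi2 b)).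
    { apply (uf_inj HUfaith). intro t. rewrite !uf_comp, pi_comm_el.
      rewrite <- (uf_comp pi2 a), (uf_eq t Hab), uf_comp, xi_gamma_el.
      apply pi_comm_el. }
    exists (pbLift _ (comp pi1 a) (comp pi2 b) Hc). split; [|apply Q_lift_pr2].
    apply (uf_inj HUfaith). intro t. rewrite !uf_comp. symmetry.
    apply (@xi_cocycle_el (uf a t) (uf b t)).
    + rewrite Q_lift_pr1_el, uf_comp. reflexivity.
    + rewrite <- !uf_comp. apply uf_eq. exact Hab.
    + rewrite Q_lift_pr2_el, uf_comp. reflexivity.
Qed.

Lemma structure_map_factors (A : C) (h : Hom C0 A) :
  isCoequalizer x pi2 h -> exists al : Hom A B, comp al h = comp p g.
Proof.
  intros [_ Hu]. destruct (Hu B (comp p g)) as [al [Hal _]]; [|exists al; exact Hal].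
  apply (uf_inj HUfaith). intro r. rewrite !uf_comp, xi_gamma_el. apply pi_comm_el.
Qed.

Section Quotient.
Variables (A : C) (h : Hom C0 A) (al : Hom A B).
Hypotheses (Hh : isCoequalizer x pi2 h) (Hal : comp al h = comp p g)
  (HUh : isCoequalizer (fmap U x) (fmap U pi2) (fmap U h)).

Lemma quotient_coeq_el r : uf h (uf x r) = uf h (uf pi2 r).
Proof. rewrite <- !uf_comp. apply uf_eq. apply Hh. Qed.

Lemma quotient_factor_el c : uf al (uf h c) = uf p (uf g c).
Proof. rewrite <- !uf_comp. apply uf_eq. exact Hal. Qed.

Lemma quotient_kernel_el : forall c c', uf h c = uf h c' -> rel c c'.
Proof. exact (sets_coequalizer_effective rel_equivalence HUh). Qed.

Lemma quotient_kernel_pair :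
  isPullback (fmap U h) (fmap U h) (fmap U x) (fmap U pi2).
Proof.
  apply sets_isPullback_intro.
  - exact quotient_coeq_el.
  - exact xi_pi2_jointly_injective_el.
  - exact quotient_kernel_el.
Qed.

Lemma E_times_h_comm : comp p pi1 = comp al (comp h pi2).
Proof.
  apply (uf_inj HUfaith). intro r. rewrite !uf_comp, quotient_factor_el.
  apply pi_comm_el.
Qed.

Definition E_times_h : Hom (pbOb (Q (comp p g))) (pbOb (Q al)) :=
  pbLift _ pi1 (comp h pi2) E_times_h_comm.

Lemma E_times_h_pr1_el r : uf (pr1 (Q al)) (uf E_times_h r) = uf pi1 r.
Proof. apply Q_lift_pr1_el. Qed.

Lemma E_times_h_pr2_el r : uf (pr2 (Q al)) (uf E_times_h r) = uf h (uf pi2 r).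
Proof. unfold E_times_h. rewrite Q_lift_pr2_el. apply uf_comp. Qed.

Lemma E_times_h_isPullback : isPullback (pr2 (Q al)) h E_times_h pi2.
Proof.
  apply (pullback_pasting_left (r1 := pi1) (Q_isPullback al)).
  - rewrite Hal. apply Q_isPullback.
  - apply Q_lift_pr1.
  - apply Q_lift_pr2.
Qed.

Lemma E_times_h_surj_el q : exists r, uf E_times_h r = q.
Proof.
  destruct (sets_coequalizer_surj HUh (uf (pr2 (Q al)) q)) as [c Hc].
  change (uf h c = uf (pr2 (Q al)) q) in Hc.
  destruct (Q_surj_el (al:=comp p g) (e:=uf (pr1 (Q al)) q) (a:=c)) as [r [R1 R2]].
  { rewrite Q_comm_el, <- Hc, uf_comp. apply quotient_factor_el. }
  exists r. apply (Q_ext_el (al:=al)).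
  - rewrite E_times_h_pr1_el. exact R1.
  - rewrite E_times_h_pr2_el, R2. exact Hc.
Qed.

Hypothesis Hjreg : isRegularEpi E_times_h.

Lemma xi_descends : exists f : Hom (pbOb (Q al)) C0, comp f E_times_h = x.
Proof.
  apply (regularEpi_desc HUfaith Hjreg). intros r r' Hrr.
  assert (E1 : uf pi1 r = uf pi1 r') by (rewrite <- !E_times_h_pr1_el, Hrr; reflexivity).
  assert (E2 : uf h (uf pi2 r) = uf h (uf pi2 r'))
    by (rewrite <- !E_times_h_pr2_el, Hrr; reflexivity).
  destruct (quotient_kernel_el E2) as [r0 [R01 R02]].
  apply (@xi_cocycle_el r r0 r'); [exact E1 | symmetry; exact R01 | symmetry; exact R02].
Qed.

Section Comparison.
Variable f : Hom (pbOb (Q al)) C0.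
Hypothesis Hf : comp f E_times_h = x.

Lemma f_E_times_h_el r : uf f (uf E_times_h r) = uf x r.
Proof. rewrite <- uf_comp. apply uf_eq. exact Hf. Qed.

Definition f_inv : Hom C0 (pbOb (Q al)) := pbLift _ g h (eq_sym Hal).

Lemma f_inv_pr1_el c : uf (pr1 (Q al)) (uf f_inv c) = uf g c.
Proof. apply Q_lift_pr1_el. Qed.

Lemma f_inv_pr2_el c : uf (pr2 (Q al)) (uf f_inv c) = uf h c.
Proof. apply Q_lift_pr2_el. Qed.

Lemma f_inv_el c : uf f_inv c = uf E_times_h (uf diag c).
Proof.
  apply (Q_ext_el (al:=al)).
  - rewrite f_inv_pr1_el, E_times_h_pr1_el, diag_pi1_el. reflexivity.
  - rewrite f_inv_pr2_el, E_times_h_pr2_el, diag_pi2_el. reflexivity.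
Qed.

Lemma f_inv_xi_el r : uf f_inv (uf x r) = uf E_times_h r.
Proof.
  apply (Q_ext_el (al:=al)).
  - rewrite f_inv_pr1_el, E_times_h_pr1_el. apply xi_gamma_el.
  - rewrite f_inv_pr2_el, E_times_h_pr2_el. apply quotient_coeq_el.
Qed.

Lemma f_f_inv : comp f f_inv = idm C0.
Proof.
  apply (uf_inj HUfaith). intro c.
  rewrite uf_comp, uf_id, f_inv_el, f_E_times_h_el. apply xi_diag_el.
Qed.

Lemma f_inv_f : comp f_inv f = idm (pbOb (Q al)).
Proof.
  apply (regularEpi_epi Hjreg). apply (uf_inj HUfaith). intro r.
  rewrite !uf_comp, uf_id, f_E_times_h_el. apply f_inv_xi_el.
Qed.

Lemma f_isDesHom :
  isDesHom (D:=Kob pb p al) (D':={| dC := C0; dgam := g; dxi := x |}) f.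
Proof.
  split; cbn [dgam dxi dC Kob].
  - apply (regularEpi_epi Hjreg). apply (uf_inj HUfaith). intro r.
    rewrite !uf_comp, f_E_times_h_el, xi_gamma_el, E_times_h_pr1_el. reflexivity.
  - intros m M1 M2. apply (uf_inj HUfaith). intro w. rewrite !uf_comp.
    destruct (E_times_h_surj_el (uf (pr2 (Q2 al)) w)) as [r Hr].
    destruct (Q_surj_el (al:=comp p g) (e:=uf (pr1 (Q2 al)) w) (a:=uf pi2 r))
      as [r' [R1 R2]].
    { rewrite Q_comm_el, uf_comp, <- Hr, E_times_h_pr1_el, pi_comm_el, uf_comp.
      reflexivity. }
    assert (Hxi : uf (dxi (Kob pb p al)) w = uf E_times_h r').
    { apply (Q_ext_el (al:=al)).
      - rewrite Kob_xi_pr1_el, E_times_h_pr1_el, R1. reflexivity.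
      - rewrite Kob_xi_pr2_el, E_times_h_pr2_el, R2, <- Hr, E_times_h_pr2_el.
        reflexivity. }
    transitivity (uf f (uf E_times_h r')); [f_equal; exact Hxi|].
    rewrite f_E_times_h_el. symmetry. apply (@xi_cocycle_el (uf m w) r r').
    + rewrite <- uf_comp, (uf_eq w M1), R1. reflexivity.
    + rewrite <- uf_comp, (uf_eq w M2), uf_comp, <- Hr, f_E_times_h_el. reflexivity.
    + exact R2.
Qed.

Lemma f_inv_isDesHom :
  isDesHom (D:={| dC := C0; dgam := g; dxi := x |}) (D':=Kob pb p al) f_inv.
Proof.
  split; cbn [dgam dxi dC].
  - apply (uf_inj HUfaith). intro c. rewrite uf_comp. apply f_inv_pr1_el.
  - intros m M1 M2. apply (uf_inj HUfaith). intro r. rewrite !uf_comp.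
    apply (Q_ext_el (al:=al)).
    + rewrite f_inv_pr1_el, xi_gamma_el, Kob_xi_pr1_el, <- uf_comp.
      symmetry. apply uf_eq. exact M1.
    + rewrite f_inv_pr2_el, Kob_xi_pr2_el, <- (uf_comp _ m).
      transitivity (uf (pr2 (Q al)) (uf (comp f_inv pi2) r)).
      * rewrite uf_comp, f_inv_pr2_el. apply quotient_coeq_el.
      * f_equal. symmetry. apply uf_eq. exact M2.
Qed.

End Comparison.

Lemma Kob_iso_descent_datum :
  exists (A' : C) (al' : Hom A' B)
    (f : Hom (dC (Kob pb p al')) C0) (f' : Hom C0 (dC (Kob pb p al'))),
    isDesHom (D:=Kob pb p al') (D':={| dC := C0; dgam := g; dxi := x |}) f /\
    isDesHom (D:={| dC := C0; dgam := g; dxi := x |}) (D':=Kob pb p al') f' /\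
    comp f f' = idm C0 /\ comp f' f = idm (dC (Kob pb p al')).
Proof.
  destruct xi_descends as [f Hf].
  exists A, al, f, f_inv. split; [|split; [|split]].
  - exact (f_isDesHom Hf).
  - exact f_inv_isDesHom.
  - exact (f_f_inv Hf).
  - exact (f_inv_f Hf).
Qed.

End Quotient.
End DescentDatum.
End ComparisonFunctor.

Theorem theorem6p1
  (C : Category) (pb : Pullbacks C) (Hpb : ValidPullbacks pb)
  (Hcoeq : HasCoeqOfEquivRels C)
  (U : Functor C SetsCat)
  (HUfaith : FaithfulFunctor U)
  (HUpb : PreservesPullbacks U)
  (HUcoeq : PreservesCoeqOfEquivRels U)
  (P : forall (A B : C), Hom A B -> Prop)
  (HPreg : forall (A B : C) (h : Hom A B), P A B h -> isRegularEpi h)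
  (HPstab : forall (A B A' Q : C) (p : Hom A B) (g : Hom A' B)
                   (q1 : Hom Q A') (q2 : Hom Q A),
      P A B p -> isPullback g p q1 q2 -> P Q A' q1)
  (HPcoeq : forall (X Y Z : C) (f g : Hom X Y) (h : Hom Y Z),
      isCoequalizer f g h ->
      isCoequalizer (fmap U f) (fmap U g) (fmap U h) ->
      isPullback (fmap U h) (fmap U h) (fmap U f) (fmap U g) ->
      P X Y f -> P X Y g -> P Y Z h) :
  forall (E B : C) (p : Hom E B), P E B p -> EffectiveDescent pb p.
Proof.
  intros E B p Pp.
  assert (Ppr2 : forall (A : C) (al : Hom A B), P _ _ (pr2 (PBp pb p al)))
    by (intros A al;
        exact (HPstab _ _ _ _ _ _ _ _ Pp (isPullback_sym (Q_isPullback p Hpb al)))).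
  assert (Hreg : forall (A : C) (al : Hom A B), isRegularEpi (pr2 (PBp pb p al)))
    by (intros A al; exact (HPreg _ _ _ (Ppr2 A al))).
  split; [exact (K_faithful_of_regular Hreg)|].
  split; [exact (K_full_of_regular HUfaith HUpb Hpb Hreg)|].
  intros [C0 g x] HD.
  pose proof (xi_pi2_isEquivRel HUfaith HUpb Hpb HD) as Hequiv.
  destruct (Hcoeq _ _ _ _ Hequiv) as [A [h Hh]].
  destruct (structure_map_factors HUfaith Hpb HD Hh) as [al Hal].
  pose proof (HUcoeq _ _ _ _ _ _ Hequiv Hh) as HUh.
  assert (Px : P _ _ x)
    by exact (HPstab _ _ _ _ _ _ _ _ (Ppr2 _ _) (swap_isPullback HUfaith HUpb Hpb HD)).
  assert (Ph : P _ _ h)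
    by exact (HPcoeq _ _ _ _ _ _ Hh HUh
                (quotient_kernel_pair HUfaith HUpb Hpb HD Hh HUh) Px (Ppr2 _ _)).
  apply (@Kob_iso_descent_datum C U HUfaith HUpb pb E B p Hpb C0 g x HD A h al Hh Hal HUh).
  apply HPreg. exact (HPstab _ _ _ _ _ _ _ _ Ph (E_times_h_isPullback HUfaith Hpb Hal)).
Qed.
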